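(* Let $\theta>1$ and let $\eta^n\in\Omega_n$ be arbitrary deterministic configurations. Then for every $\lambda>0$, $$\limsup_{n\to\infty}\frac1n\log\mathbb P_{\delta_{\eta^n}}\Big[\sup_{t\in[0,T]}|\langle\pi^n_t,1\rangle-\langle\pi^n_0,1\rangle|>\lambda\Big]=-\infty.$$
   Context: Model: $\Sigma_n=\{1,\dots,n-1\}$, $\Omega_n=\{0,1\}^{\Sigma_n}$, $\alpha,\beta\in(0,1)$, $r_1=\alpha,r_{n-1}=\beta$, $T>0$; $\mathbb P_{\delta_{\eta^n}}$ is the law of the Markov process on $[0,T]$ with generator $n^2\mathcal L_n$, $(\mathcal L_nf)(\eta)=\sum_{x=1}^{n-2}[f(\eta^{x,x+1})-f(\eta)]+n^{-\theta}\sum_{x\in\{1,n-1\}}[r_x(1-\eta(x))+(1-r_x)\eta(x)][f(\sigma^x\eta)-f(\eta)]$ ($\eta^{x,x+1}$ exchanges values at $x,x+1$; $\sigma^x\eta$ flips the value at $x$), started at $\eta^n$. $\pi^n_t=\frac1n\sum_{x=1}^{n-1}\eta_t(x)\delta_{x/n}$, so $\langle\pi^n_t,1\rangle=\frac1n\sum_x\eta_t(x)$. *)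

From HB Require Import structures.
From mathcomp Require Import all_boot all_order all_algebra.
From mathcomp Require Import all_classical all_reals all_analysis.
Set Implicit Arguments. Unset Strict Implicit. Unset Printing Implicit Defensive.
Import Order.TTheory GRing.Theory Num.Theory.
Import numFieldNormedType.Exports.
Local Open Scope ring_scope.

Section CTMC.
Variables (R : realType) (S : finType).

(* [q x y] (x <> y) is the jump rate from x to y; diagonal entries are ignored. *)
Definition exit_rate (q : S -> S -> R) (x : S) : R := \sum_(z | z != x) q x z.

(* uniformization constant: strictly above every exit rate *)
Definition unif_const (q : S -> S -> R) : R :=
  1 + \big[Num.max/0]_(x : S) exit_rate q x.

Definition unif_kernel (q : S -> S -> R) (x y : S) : R :=
  if x == y then 1 - exit_rate q x / unif_const q else q x y / unif_const q.

Definition skeleton_prob (q : S -> S -> R) (x0 : S) (k : nat)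
    (E : seq S -> bool) : R :=
  \sum_(ys : k.-tuple S)
     (\prod_(i < k) unif_kernel q (nth x0 (x0 :: ys) i) (nth x0 ys i))
     * (E (x0 :: ys))%:R.

(* Law of the CTMC with rates q on [0,T] started at x0 (constructed by
   uniformization: Poisson(c) clock, jump chain unif_kernel).  The set of
   states visited by the cadlag path on [0,T] is exactly the set of states of
   the skeleton up to the number K of clock rings in [0,T], K ~ Poisson(cT).
   [path_event_prob q x0 T E] is the probability that the sequence of states
   visited during [0,T] satisfies E. *)
Definition path_event_prob (q : S -> S -> R) (x0 : S) (T : R)
    (E : seq S -> bool) : R :=
  let c := unif_const q in
  limn (series (fun k : nat =>
     expR (- (c * T)) * (c * T) ^+ k / (k`!)%:R * skeleton_prob q x0 k E)).

End CTMC.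

(* Omega_n = {0,1}^{Sigma_n}, Sigma_n = {1,...,n-1}; index i : 'I_(n-1)
   represents site x = i+1. *)
Definition Config (n : nat) := {ffun 'I_n.-1 -> bool}.

(* eta(x) for a site x given as a natural number (false outside Sigma_n) *)
Definition occ n (eta : Config n) (x : nat) : bool :=
  [exists i : 'I_n.-1, (i.+1 == x) && eta i].

Definition exch n (eta : Config n) (x : nat) : Config n :=
  [ffun i : 'I_n.-1 =>
     let y := i.+1 in
     occ eta (if y == x then x.+1 else if y == x.+1 then x else y)].

Definition flip n (eta : Config n) (x : nat) : Config n :=
  [ffun i : 'I_n.-1 => if i.+1 == x then ~~ occ eta x else eta i].

Section Model.
Variables (R : realType) (n : nat) (theta alpha beta : R).

Definition rsite (x : nat) : R := if x == 1%N then alpha else beta.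

Definition Lgen (f : Config n -> R) (eta : Config n) : R :=
  \sum_(1 <= x < n.-1) (f (exch eta x) - f eta)
  + (n%:R `^ (- theta)) *
    \sum_(x <- undup [:: 1%N; n.-1])
      (rsite x * (1 - (occ eta x)%:R) + (1 - rsite x) * (occ eta x)%:R)
      * (f (flip eta x) - f eta).

Definition rates (eta zeta : Config n) : R :=
  n%:R ^+ 2 * Lgen (fun xi => (xi == zeta)%:R) eta.

Definition mass (eta : Config n) : R :=
  n%:R^-1 * \sum_(i : 'I_n.-1) (eta i)%:R.

(* the event  sup_{t in [0,T]} |<pi_t,1> - <pi_0,1>| > lambda,
   read on the sequence of visited states (first entry = initial state) *)
Definition mass_dev_event (lambda : R) (eta0 : Config n) (s : seq (Config n)) : bool :=
  has (fun eta => lambda < `| mass eta - mass eta0 |) s.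

Definition prob_mass_dev (T lambda : R) (eta0 : Config n) : R :=
  path_event_prob rates eta0 T (mass_dev_event lambda eta0).

End Model.

Definition elog (R : realType) (p : R) : \bar R :=
  if p == 0 then -oo%E else (ln p)%:E.

From HB Require Import structures.
From mathcomp Require Import all_boot all_order all_algebra.
From mathcomp Require Import all_classical all_reals all_analysis.
From mathcomp Require Import perm ring lra.
Set Implicit Arguments.
Unset Strict Implicit.
Unset Printing Implicit Defensive.

Import Order.TTheory GRing.Theory Num.Theory.
Import numFieldNormedType.Exports.
Local Open Scope classical_set_scope.
Local Open Scope ring_scope.

(* Exchanges preserve the mass <pi, 1>; only the two boundary flips change it,
   each by 1/n, at rate at most n^(2 - theta).  A Chernoff bound with exponent
   n t on the total variation of the mass along the path (a product bound along
   the uniformized jump chain, averaged over the Poisson number of jumps) gives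
     P[sup |<pi_t, 1> - <pi_0, 1>| > lambda]
       <= exp(- n t lambda + 2 T n^(2 - theta) (e^t - 1)).
   For t = (theta - 1) ln n the second term is at most 2 T n, so
   (1/n) log P <= 2 T - (theta - 1) lambda ln n, which tends to -oo. *)

Lemma series_exp_coeff_dominated (R : realType) (a : nat -> R) (x k : R) :
  0 <= x -> 0 <= k -> (forall i, 0 <= a i <= k * exp_coeff x i) ->
  cvgn (series a) /\ 0 <= limn (series a) <= k * expR x.
Proof.
move=> x0 k0 ha.
have a_ge0 i : 0 <= a i by case/andP: (ha i).
have a_le i : a i <= k * exp_coeff x i by case/andP: (ha i).
have kexpE : series (fun i => k * exp_coeff x i) = (fun n => k * series (exp_coeff x) n).
  by apply/funext => n; rewrite /series /= big_distrr.
have cvg_kexp : cvgn (series (fun i => k * exp_coeff x i)).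
  by rewrite kexpE; apply: is_cvgM; [exact: is_cvg_cst | exact: is_cvg_series_exp_coeff].
have cvg_a : cvgn (series a).
  apply: (series_le_cvg a_ge0 _ a_le cvg_kexp) => i.
  by rewrite mulr_ge0 ?exp_coeff_ge0.
split => //; apply/andP; split.
  by apply: limr_ge => //; apply: nearW => n; apply: sumr_ge0.
apply: le_trans (_ : limn (series (fun i => k * exp_coeff x i)) <= _).
  by apply: ler_lim => //; apply: nearW => n; apply: ler_sum.
rewrite kexpE limM //; last exact: is_cvg_series_exp_coeff.
  by rewrite lim_cst.
exact: is_cvg_cst.
Qed.

Section TupleSums.
Variables (V : nmodType) (T : finType).

Lemma big_tuple0 (F : 0.-tuple T -> V) : \sum_(t : 0.-tuple T) F t = F [tuple].
Proof. by rewrite (big_pred1 [tuple]) // => t; apply/esym/eqP; exact: tuple0. Qed.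

Lemma big_tuple_cons k (F : k.+1.-tuple T -> V) :
  \sum_(t : k.+1.-tuple T) F t = \sum_(y : T) \sum_(t : k.-tuple T) F [tuple of y :: t].
Proof.
rewrite pair_big /= (reindex (fun p : T * k.-tuple T => [tuple of p.1 :: p.2])) //=.
exists (fun t : k.+1.-tuple T => (thead t, behead_tuple t)) => [[y t] _|t _] /=.
  by rewrite theadE; congr pair; apply: val_inj.
by rewrite [RHS]tuple_eta.
Qed.

End TupleSums.

Section Variation.
Variables (R : realType) (S : eqType) (m : S -> R).

Fixpoint variation (s : seq S) : R :=
  if s is a :: ((b :: _) as s') then `|m b - m a| + variation s' else 0.

Lemma variation_ge0 s : 0 <= variation s.
Proof. by elim: s => // a [|b s] IH //=; exact: addr_ge0. Qed.

Lemma dist_le_variation a s y : y \in a :: s -> `|m y - m a| <= variation (a :: s).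
Proof.
elim: s a => [|b s IH] a; first by rewrite inE => /eqP ->; rewrite subrr normr0.
rewrite inE => /orP[/eqP ->|ys]; first by rewrite subrr normr0 variation_ge0.
apply: le_trans (_ : `|m y - m b| + `|m b - m a| <= _).
  by rewrite (le_trans _ (ler_normD _ _)) // addrA subrK.
by rewrite /= addrC lerD2l; exact: IH.
Qed.

End Variation.

Section PathExpectation.
Variables (R : realType) (S : finType) (K : S -> S -> R).

Definition path_expect (x0 : S) (k : nat) (f : seq S -> R) : R :=
  \sum_(ys : k.-tuple S)
     (\prod_(i < k) K (nth x0 (x0 :: ys) i) (nth x0 ys i)) * f (x0 :: ys).

Lemma path_expect0 x0 f : path_expect x0 0 f = f [:: x0].
Proof. by rewrite /path_expect big_tuple0 big_ord0 mul1r. Qed.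

Lemma path_expectS x0 k f :
  path_expect x0 k.+1 f = \sum_y K x0 y * path_expect y k (fun s => f (x0 :: s)).
Proof.
rewrite /path_expect big_tuple_cons; apply: eq_bigr => y _; rewrite big_distrr.
apply: eq_bigr => t _ /=; rewrite big_ord_recl /= -mulrA; congr (_ * (_ * _)).
apply: eq_bigr => i _ /=; rewrite add0n; congr (K _ _).
  by apply: set_nth_default; rewrite /= size_tuple ltnS ltnW.
by apply: set_nth_default; rewrite size_tuple.
Qed.

Lemma path_expectZ x0 k a f :
  path_expect x0 k (fun s => a * f s) = a * path_expect x0 k f.
Proof. by rewrite /path_expect big_distrr; apply: eq_bigr => t _; rewrite mulrCA. Qed.

Hypothesis K_ge0 : forall x y, 0 <= K x y.

Lemma path_expect_ge0 x0 k f :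
  (forall t : k.-tuple S, 0 <= f (x0 :: t)) -> 0 <= path_expect x0 k f.
Proof. by move=> f_ge0; apply: sumr_ge0 => t _; rewrite mulr_ge0 ?prodr_ge0. Qed.

Lemma ler_path_expect x0 k f g :
  (forall t : k.-tuple S, f (x0 :: t) <= g (x0 :: t)) ->
  path_expect x0 k f <= path_expect x0 k g.
Proof. by move=> fg; apply: ler_sum => t _; rewrite ler_wpM2l ?prodr_ge0. Qed.

(* The exponential of the variation is multiplicative along the path, so a
   one-step bound iterates. *)
Lemma path_expect_exp_variation (m : S -> R) (u B : R) :
  (forall x, \sum_y K x y * expR (u * `|m y - m x|) <= B) ->
  forall k x0, path_expect x0 k (fun s => expR (u * variation m s)) <= B ^+ k.
Proof.
move=> step_le; elim=> [|k IH] x0; first by rewrite path_expect0 /= mulr0 expR0 expr0.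
have B_ge0 : 0 <= B.
  by apply: le_trans (step_le x0); apply: sumr_ge0 => y _; rewrite mulr_ge0 ?expR_ge0.
rewrite path_expectS exprS.
apply: le_trans (_ : \sum_y K x0 y * expR (u * `|m y - m x0|) * B ^+ k <= _).
  apply: ler_sum => y _; rewrite -mulrA ler_wpM2l //.
  have -> : path_expect y k (fun s => expR (u * variation m (x0 :: s))) =
            expR (u * `|m y - m x0|) * path_expect y k (fun s => expR (u * variation m s)).
    rewrite -path_expectZ; apply: eq_bigr => t _.
    by rewrite /= -expRD mulrDr.
  by rewrite ler_wpM2l ?expR_ge0.
by rewrite -big_distrl ler_wpM2r ?exprn_ge0.
Qed.

End PathExpectation.

Section Uniformization.
Variables (R : realType) (S : finType) (q : S -> S -> R).

Lemma unif_const_gt0 : 0 < unif_const q.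
Proof.
rewrite /unif_const ltr_pwDl //.
by elim/big_rec: _ => // i y _ y_ge0; rewrite le_max y_ge0 orbT.
Qed.

Lemma exit_rate_le x : exit_rate q x <= unif_const q - 1.
Proof. by rewrite /unif_const addrC addKr; apply: le_bigmax. Qed.

Lemma skeleton_probE x0 k E :
  skeleton_prob q x0 k E = path_expect (unif_kernel q) x0 k (fun s => (E s)%:R).
Proof. by []. Qed.

Lemma unif_kernel_ge0 :
  (forall x y, x != y -> 0 <= q x y) -> forall x y, 0 <= unif_kernel q x y.
Proof.
move=> q_ge0 x y; rewrite /unif_kernel; case: eqVneq => [_|xy].
  rewrite subr_ge0 ler_pdivrMr ?unif_const_gt0 // mul1r.
  by apply: le_trans (exit_rate_le x) _; rewrite lerBlDr lerDl.
by rewrite divr_ge0 ?q_ge0 ?ltW ?unif_const_gt0.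
Qed.

Lemma unif_kernel_expect x (w : S -> R) :
  \sum_y unif_kernel q x y * w y =
  w x + (unif_const q)^-1 * \sum_(y | y != x) q x y * (w y - w x).
Proof.
rewrite (bigD1 x) //= /unif_kernel eqxx.
rewrite (eq_bigr (fun y => (unif_const q)^-1 * (q x y * w y))); last first.
  by move=> y yx; rewrite eq_sym (negbTE yx) mulrAC mulrC.
rewrite -big_distrr /= /exit_rate.
have -> : \sum_(y | y != x) q x y * (w y - w x) =
  \sum_(y | y != x) q x y * w y - (\sum_(y | y != x) q x y) * w x.
  by rewrite big_distrl -sumrB; apply: eq_bigr => y _; rewrite mulrBr.
by field; rewrite gt_eqF ?unif_const_gt0.
Qed.

End Uniformization.

Section Chernoff.
Variables (R : realType) (S : finType) (q : S -> S -> R) (m : S -> R) (u Y : R).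
Hypothesis q_ge0 : forall x y, x != y -> 0 <= q x y.
Hypothesis u_ge0 : 0 <= u.
Hypothesis exp_moment_le :
  forall x, \sum_(y | y != x) q x y * (expR (u * `|m y - m x|) - 1) <= Y.

Definition dev_event (lam : R) (x0 : S) (s : seq S) : bool :=
  has (fun y => lam < `|m y - m x0|) s.

Lemma dev_event_le_exp_variation lam x0 s :
  (dev_event lam x0 (x0 :: s))%:R <= expR (- (u * lam)) * expR (u * variation m (x0 :: s)).
Proof.
rewrite -expRD /dev_event; case: hasP => [[y ys lt_lam]|_]; last exact: expR_ge0.
rewrite -expR0 ler_expR addrC subr_ge0 ler_wpM2l //.
exact: le_trans (ltW lt_lam) (dist_le_variation m ys).
Qed.

Let c := unif_const q.

Lemma skeleton_prob_dev_le lam x0 k :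
  0 <= skeleton_prob q x0 k (dev_event lam x0) <= expR (- (u * lam)) * (1 + c^-1 * Y) ^+ k.
Proof.
have K_ge0 := unif_kernel_ge0 q_ge0.
rewrite skeleton_probE; apply/andP; split.
  by apply: path_expect_ge0 => // t; rewrite ler0n.
apply: le_trans (ler_path_expect (x0 := x0) (k := k) K_ge0
  (g := fun s => expR (- (u * lam)) * expR (u * variation m s))
  (dev_event_le_exp_variation lam x0)) _.
rewrite path_expectZ ler_wpM2l ?expR_ge0 //.
apply: path_expect_exp_variation => // x.
rewrite unif_kernel_expect subrr normr0 mulr0 expR0 lerD2l.
by rewrite ler_wpM2l ?exp_moment_le // invr_ge0 ltW ?unif_const_gt0.
Qed.

(* Against the Poisson(c T) law of the number of jumps, the bound
   e^(- u lam) B^k with B = 1 + Y / c averages to e^(- u lam + c T (B - 1)). *)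
Lemma path_event_prob_dev_le (T lam : R) x0 : 0 <= T ->
  0 <= path_event_prob q x0 T (dev_event lam x0) <= expR (- (u * lam) + T * Y).
Proof.
move=> T_ge0; have c_gt0 : 0 < c := unif_const_gt0 q.
have Y_ge0 : 0 <= Y.
  apply: le_trans (exp_moment_le x0); apply: sumr_ge0 => y yx.
  rewrite mulr_ge0 ?q_ge0 1?eq_sym //.
  by rewrite subr_ge0 -expR0 ler_expR mulr_ge0.
set B := 1 + c^-1 * Y.
have B_ge0 : 0 <= B by rewrite addr_ge0 // mulr_ge0 // invr_ge0 ltW.
have cT_ge0 : 0 <= c * T by rewrite mulr_ge0 // ltW.
set w := fun k => expR (- (c * T)) * (c * T) ^+ k / (k`!)%:R.
have terms_le k : 0 <= w k * skeleton_prob q x0 k (dev_event lam x0) <=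
    expR (- (c * T)) * expR (- (u * lam)) * exp_coeff (c * T * B) k.
  have /andP[s_ge0 s_le] := skeleton_prob_dev_le lam x0 k.
  have w_ge0 : 0 <= w k by rewrite !mulr_ge0 ?expR_ge0 ?exprn_ge0 ?invr_ge0 ?ler0n.
  rewrite mulr_ge0 //=; apply: le_trans (ler_wpM2l w_ge0 s_le) _.
  by rewrite /w /exp_coeff /= !exprMn le_eqVlt; apply/orP; left; apply/eqP; ring.
have [_ /andP[p_ge0 p_le]] := series_exp_coeff_dominated
  (mulr_ge0 cT_ge0 B_ge0) (mulr_ge0 (expR_ge0 _) (expR_ge0 _)) terms_le.
rewrite /path_event_prob -/c p_ge0 /=; apply: le_trans p_le _.
by rewrite -!expRD ler_expR /B le_eqVlt; apply/orP; left; apply/eqP; field; rewrite gt_eqF.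
Qed.

End Chernoff.

Section ExclusionModel.
Variables (R : realType) (n : nat).

Lemma occ_site (eta : Config n) (i : 'I_n.-1) : occ eta i.+1 = eta i.
Proof.
apply/existsP/idP => [[j /andP[/eqP ij eta_j]]|eta_i]; last by exists i; rewrite eqxx.
by have -> : i = j by apply: val_inj; case: ij.
Qed.

(* [exch eta x] permutes the sites by the transposition of x - 1 and x
   (as indices of 'I_n.-1). *)
Lemma sum_exch (eta : Config n) x : (1 <= x < n.-1)%N ->
  \sum_(i : 'I_n.-1) ((exch eta x i)%:R : R) = \sum_(i : 'I_n.-1) (eta i)%:R.
Proof.
case/andP=> x_ge1 x_lt.
pose a := Ordinal (leq_ltn_trans (leq_pred x) x_lt); pose b := Ordinal x_lt.
have exchE i : exch eta x i = eta (tperm a b i).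
  rewrite /exch ffunE /=.
  have ia : (i == a) = (i.+1 == x).
    by apply/eqP/eqP => [->|h]; [rewrite /= prednK | apply: val_inj; rewrite /= -h].
  have ib : (i == b) = (i.+1 == x.+1) by [].
  case: (eqVneq i a) ia => [-> _|ina]; first by rewrite tpermL /= prednK // eqxx; exact: (occ_site eta b).
  move/esym => ->; case: (eqVneq i b) ib => [-> _|inb].
    by rewrite tpermR eqxx -(occ_site eta a) /= prednK.
  by move/esym => ->; rewrite tpermD 1?eq_sym // occ_site.
under eq_bigr do rewrite exchE.
by rewrite [RHS](reindex_inj (@perm_inj _ (tperm a b))).
Qed.

Lemma mass_exch (eta : Config n) x : (1 <= x < n.-1)%N -> mass R (exch eta x) = mass R eta.
Proof. by move=> x_range; rewrite /mass sum_exch. Qed.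

Lemma dist_mass_flip (eta : Config n) x : `|mass R (flip eta x) - mass R eta| <= n%:R^-1.
Proof.
rewrite /mass -mulrBr normrM ger0_norm ?invr_ge0 ?ler0n //.
rewrite -[leRHS]mulr1 ler_wpM2l ?invr_ge0 ?ler0n // -sumrB.
apply: le_trans (ler_norm_sum _ _ _) _.
apply: le_trans (_ : \sum_(i : 'I_n.-1) ((i.+1 == x)%:R : R) <= 1).
  apply: ler_sum => i _; rewrite /flip ffunE.
  case: eqP => [<-|_]; last by rewrite subrr normr0.
  by rewrite occ_site; case: (eta i); rewrite /= ?subr0 ?sub0r ?normrN normr1.
case: (pickP (fun i : 'I_n.-1 => i.+1 == x)) => [i0 i0x|no_site]; last first.
  by rewrite big1 // => i _; rewrite no_site.
rewrite (bigD1 i0) //= i0x big1 ?addr0 // => j ji0.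
suff /negbTE -> : j.+1 != x by [].
by apply: contra ji0 => /eqP jx; apply/eqP/val_inj; move/eqP: i0x; rewrite -jx => -[].
Qed.

Variables (theta alpha beta : R).
Hypotheses (alpha01 : 0 < alpha < 1) (beta01 : 0 < beta < 1).

Definition flip_rate (eta : Config n) x : R :=
  rsite alpha beta x * (1 - (occ eta x)%:R) + (1 - rsite alpha beta x) * (occ eta x)%:R.

Lemma flip_rate_bounds eta x : 0 <= flip_rate eta x <= 1.
Proof.
have [r_ge0 r_le1] : 0 <= rsite alpha beta x /\ rsite alpha beta x <= 1.
  case/andP: alpha01 => a0 a1; case/andP: beta01 => b0 b1.
  by rewrite /rsite; case: eqP => _; split; apply: ltW.
rewrite /flip_rate; case: (occ eta x) => /=; rewrite ?subrr ?subr0 ?mulr0 ?mulr1 ?add0r ?addr0.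
  by rewrite subr_ge0 r_le1 lerBlDr lerDl r_ge0.
by rewrite r_ge0 r_le1.
Qed.

(* The rates are the generator applied to indicators, and the generator is linear. *)
Lemma sum_rates_mul (g : Config n -> R) eta :
  \sum_y rates theta alpha beta eta y * g y = n%:R ^+ 2 * Lgen theta alpha beta g eta.
Proof.
have sum_dirac_diff (a b : Config n) :
    \sum_y (((a == y)%:R - (b == y)%:R) * g y) = g a - g b.
  have dirac c : \sum_y ((c == y)%:R * g y) = g c.
    rewrite (bigD1 c) //= eqxx mul1r big1 ?addr0 // => y yc.
    by rewrite eq_sym (negbTE yc) mul0r.
  by rewrite -(dirac a) -(dirac b) -sumrB; apply: eq_bigr => y _; rewrite mulrBl.
under eq_bigr do rewrite /rates -mulrA.
rewrite -big_distrr /=; congr (_ * _); rewrite /Lgen.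
under eq_bigr do rewrite mulrDl.
rewrite big_split; congr (_ + _).
  under eq_bigr do rewrite big_distrl.
  by rewrite exchange_big; apply: eq_bigr => a _; exact: sum_dirac_diff.
under eq_bigr do rewrite -mulrA big_distrl.
rewrite -big_distrr; congr (_ * _); rewrite exchange_big; apply: eq_bigr => b _.
by rewrite -sum_dirac_diff big_distrr; apply: eq_bigr => y _; rewrite /= mulrA.
Qed.

Lemma rates_ge0 (x y : Config n) : x != y -> 0 <= rates theta alpha beta x y.
Proof.
move=> xy; rewrite /rates /Lgen (negbTE xy) mulr_ge0 ?exprn_ge0 ?ler0n //.
rewrite addr_ge0 ?sumr_ge0 // => [a _|]; first by rewrite /= subr0 ler0n.
rewrite mulr_ge0 ?powR_ge0 ?sumr_ge0 // => b _; rewrite /= subr0 mulr_ge0 //.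
by case/andP: (flip_rate_bounds x b).
Qed.

Lemma rates_exp_moment_le (t : R) (x : Config n) : (0 < n)%N -> 0 <= t ->
  \sum_(y | y != x)
     rates theta alpha beta x y * (expR (n%:R * t * `|mass R y - mass R x|) - 1)
  <= n%:R ^+ 2 * (n%:R `^ (- theta) * (2 * (expR t - 1))).
Proof.
move=> n_gt0 t_ge0; pose g (y : Config n) := expR (n%:R * t * `|mass R y - mass R x|) - 1.
have g_x : g x = 0 by rewrite /g subrr normr0 mulr0 expR0 subrr.
have -> : \sum_(y | y != x)
    rates theta alpha beta x y * (expR (n%:R * t * `|mass R y - mass R x|) - 1) =
    \sum_y rates theta alpha beta x y * g y.
  by rewrite [RHS](bigD1 x) //= g_x mulr0 add0r.
rewrite sum_rates_mul ler_wpM2l ?exprn_ge0 ?ler0n // /Lgen g_x.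
rewrite big_nat_cond big1 ?add0r => [|a /andP[a_range _]]; last first.
  by rewrite subr0 /g mass_exch // subrr normr0 mulr0 expR0 subrr.
rewrite ler_wpM2l ?powR_ge0 //.
have flip_term b : 0 <= flip_rate x b * (g (flip x b) - 0) <= expR t - 1.
  rewrite subr0; case/andP: (flip_rate_bounds x b) => r_ge0 r_le1.
  have g_ge0 : 0 <= g (flip x b).
    by rewrite /g subr_ge0 -expR0 ler_expR !mulr_ge0 ?ler0n.
  have g_le : g (flip x b) <= expR t - 1.
    rewrite /g lerD2r ler_expR -mulrA mulrCA -[leRHS]mulr1 ler_wpM2l //.
    apply: le_trans (_ : n%:R * n%:R^-1 <= 1).
      by rewrite ler_wpM2l ?ler0n ?dist_mass_flip.
    by rewrite mulfV // pnatr_eq0 -lt0n.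
  rewrite mulr_ge0 //=; apply: le_trans g_le.
  by rewrite -[leRHS]mul1r ler_wpM2r.
have /andP[l_ge0 l_le] := flip_term 1%N; have /andP[r_ge0 r_le] := flip_term n.-1.
rewrite /flip_rate in l_ge0 l_le r_ge0 r_le.
by rewrite /=; case: ifP => _; rewrite ?big_cons big_nil addr0; lra.
Qed.

Lemma prob_mass_dev_le (t T lam : R) (x0 : Config n) :
  (0 < n)%N -> 0 <= t -> 0 <= T ->
  0 <= prob_mass_dev theta alpha beta T lam x0 <=
  expR (- (n%:R * t * lam) + T * (n%:R ^+ 2 * (n%:R `^ (- theta) * (2 * (expR t - 1))))).
Proof.
move=> n_gt0 t_ge0 T_ge0.
apply: (path_event_prob_dev_le rates_ge0 _ (fun x => rates_exp_moment_le x n_gt0 t_ge0)) => //.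
by rewrite mulr_ge0 ?ler0n.
Qed.

End ExclusionModel.

Lemma cvgeNy_le_ln (R : realType) (u : nat -> \bar R) (a b : R) : 0 < b ->
  (\forall N \near \oo, u N <= (a - b * ln N%:R)%:E)%E -> u @ \oo --> -oo%E.
Proof.
move=> b_gt0 u_le; apply/cvgeNyPle => M.
near=> N; apply: le_trans (_ : _ <= (a - b * ln N%:R)%:E)%E _; first by near: N.
rewrite lee_fin lerBlDr -lerBlDl -ler_pdivrMl //.
have N_ge : expR (b^-1 * (a - M)) <= N%:R by near: N; exact: nbhs_infty_ger.
by rewrite -ler_expR lnK ?posrE // (lt_le_trans (expR_gt0 _) N_ge).
Unshelve. all: by end_near.
Qed.

Lemma scaled_log_prob_mass_dev_le (R : realType) (alpha beta theta T lam : R) n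
    (x0 : Config n) :
  0 < alpha < 1 -> 0 < beta < 1 -> 0 < T -> 1 < theta -> (0 < n)%N ->
  (((n%:R)^-1)%:E * elog (prob_mass_dev theta alpha beta T lam x0) <=
   (2 * T - (theta - 1) * lam * ln n%:R)%:E)%E.
Proof.
move=> alpha01 beta01 T_gt0 theta_gt1 n_gt0.
have n_pos : 0 < n%:R :> R by rewrite ltr0n.
set t := (theta - 1) * ln (n%:R : R).
have t_ge0 : 0 <= t by rewrite mulr_ge0 ?ln_ge0 ?ler1n // subr_ge0 ltW.
have /andP[p_ge0 p_le] := prob_mass_dev_le theta alpha01 beta01 lam x0 n_gt0 t_ge0 (ltW T_gt0).
set p := prob_mass_dev _ _ _ _ _ _ in p_ge0 p_le *.
have flip_cost : n%:R ^+ 2 * (n%:R `^ (- theta) * expR t) = n%:R :> R.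
  rewrite /powR gt_eqF // -expRD /t.
  have -> : - theta * ln (n%:R : R) + (theta - 1) * ln n%:R = - ln (n%:R : R) by ring.
  by rewrite expRN lnK ?posrE // expr2 mulfK // gt_eqF.
have cost_le : T * (n%:R ^+ 2 * (n%:R `^ (- theta) * (2 * (expR t - 1)))) <= 2 * T * n%:R.
  rewrite -[in X in _ <= X]flip_cost.
  rewrite (_ : 2 * T * _ = T * (n%:R ^+ 2 * (n%:R `^ (- theta) * (2 * expR t)))); last by ring.
  rewrite ler_wpM2l ?(ltW T_gt0) // ler_wpM2l ?exprn_ge0 ?ler0n //.
  by rewrite ler_wpM2l ?powR_ge0 // ler_wpM2l // gerDl lerN10.
have p_le_exp : p <= expR (n%:R * (2 * T - (theta - 1) * lam * ln n%:R)).
  apply: le_trans p_le _; rewrite ler_expR.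
  have -> : n%:R * (2 * T - (theta - 1) * lam * ln n%:R) = - (n%:R * t * lam) + 2 * T * n%:R.
    by rewrite /t; ring.
  by rewrite lerD2l.
rewrite /elog; case: eqP => [_|/eqP p_neq0].
  by rewrite gt0_muleNy ?lte_fin ?invr_gt0 // leNye.
have p_gt0 : 0 < p by rewrite lt_neqAle eq_sym p_neq0.
rewrite -EFinM lee_fin ler_pdivrMl // -[leRHS]expRK ler_ln ?posrE ?expR_gt0 //.
Qed.

Theorem mainTheorem8 (R : realType) (alpha beta theta T : R)
  (halpha : 0 < alpha < 1) (hbeta : 0 < beta < 1) (hT : 0 < T)
  (htheta : 1 < theta) (eta : forall n : nat, Config n) :
  forall lambda : R, 0 < lambda ->
  limn_esup (fun n : nat =>
     ((n%:R)^-1)%:E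
       * elog (@prob_mass_dev R n theta alpha beta T lambda (eta n)))%E
  = -oo%E.
Proof.
move=> lam lam_gt0; apply: (cvgNy_limn_einf_sup _).2.
apply: (@cvgeNy_le_ln _ _ (2 * T) ((theta - 1) * lam)).
  by rewrite mulr_gt0 // subr_gt0.
near=> N; apply: scaled_log_prob_mass_dev_le => //.
by near: N; exact: nbhs_infty_gt.
Unshelve. all: by end_near.
Qed.
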